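(* Let $b_n = \sum_{k=0}^n B_{n-k}^{(-k)}$ for $n\ge 0$. Then $b_0=1$ and for all $n\ge 0$, \[ 3b_{n+1} = 2b_n + \sum_{k=0}^n \binom{n+1}{k} b_k + 3. \]
   Context: For an integer $k$, $\mathrm{Li}_k(z)=\sum_{m\ge1} z^m/m^k$ (for $k\le 0$ this is a rational function of $z$). The poly-Bernoulli numbers $B_n^{(k)}\in\mathbb{Q}$ are defined by $\sum_{n\ge0} B_n^{(k)} \frac{t^n}{n!} = \frac{\mathrm{Li}_k(1-e^{-t})}{1-e^{-t}}$. *)

From mathcomp Require Import all_boot all_order all_algebra.
Set Implicit Arguments. Unset Strict Implicit. Unset Printing Implicit Defensive.
Import Order.TTheory GRing.Theory Num.Theory.
Local Open Scope ring_scope.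

(* A formal power series in t with rational coefficients: n |-> [t^n] f. *)
Definition fps := nat -> rat.

Definition fps_mul (f g : fps) : fps :=
  fun n => \sum_(i < n.+1) f i * g (n - i)%N.

Definition fps_one : fps := fun n => if n == 0%N then 1 else 0.

Fixpoint fps_pow (f : fps) (j : nat) : fps :=
  if j is j'.+1 then fps_mul f (fps_pow f j') else fps_one.

Definition one_minus_exp_neg : fps :=
  fun n => if n == 0%N then 0 else (-1) ^+ n.+1 / (n`!)%:R.

(* Li_k(z)/z = sum_{m>=1} z^(m-1) / m^k.  Substituting z = 1 - e^{-t}
   (which has zero constant term, so z^(m-1) = O(t^(m-1))), the coefficient
   of t^n only receives contributions from m = 1, ..., n+1. *)
Definition polyLi_quot_coef (k : int) (n : nat) : rat :=
  \sum_(1 <= m < n.+2) fps_pow one_minus_exp_neg m.-1 n / (m%:Q) ^ k.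

(* Poly-Bernoulli numbers: sum_n B_n^(k) t^n/n! = Li_k(1-e^-t)/(1-e^-t). *)
Definition polyBernoulli (n : nat) (k : int) : rat :=
  (n`!)%:R * polyLi_quot_coef k n.

Definition pbsum (n : nat) : rat :=
  \sum_(k < n.+1) polyBernoulli (n - k)%N (- (k%:Z)).

From mathcomp Require Import all_boot all_order all_algebra ring lra zify.
Set Implicit Arguments. Unset Strict Implicit. Unset Printing Implicit Defensive.
Import Order.TTheory GRing.Theory Num.Theory.
Local Open Scope ring_scope.

(* Put c(m, j) = j! [t^j] (1 - e^{-t})^m.  Expanding Li_{-k}(z)/z = sum_m m^k z^(m-1)
   gives B_n^(-k) = sum_m (m+1)^k c(m, n), hence b_n = sum_m a_m(n) with
   a_m(n) = sum_k (m+1)^k c(m, n-k).  Since (1 - e^{-t})' = 1 - (1 - e^{-t}), the c(m, j)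
   satisfy a Stirling-type recurrence, which identifies the ordinary generating series
     A_m(x) = sum_n a_m(n) x^n = m! x^m / ((1 + x) ... (1 + m x) (1 - (m+1) x)),
   and also its binomial transform L A_m, where (L g)(x) = g(x/(1-x)) / (1-x).
   The recurrence is the coefficient of x^(n+1) in
     sum_m ((4 - 2x) A_m - L A_m) = 3 / (1 - x),
   which telescopes: the m-th summand is F_m - F_(m+1) for
   F_m = (3 - (m+3) x) (1 + m x) A_m / (1 - x), and F_0 = 3 / (1 - x).
   All of this is done with polynomials modulo x^N, where A_m = 0 for m >= N. *)

Lemma sum_binS (R : pzRingType) (f : nat -> R) n :
  \sum_(k < n.+2) 'C(n.+1, k)%:R * f k =
  \sum_(k < n.+1) 'C(n, k)%:R * f k + \sum_(k < n.+1) 'C(n, k)%:R * f k.+1.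
Proof.
rewrite big_ord_recl /=.
under eq_bigr => k _ do rewrite /bump /= binS natrD mulrDl.
rewrite big_split /= addrA; congr (_ + _).
by rewrite [RHS]big_ord_recl big_ord_recr /= (@bin_small n n.+1) // mul0r addr0 !bin0.
Qed.

(* This is (-1)^(j-m) m! S(j, m), with S the Stirling numbers of the second kind. *)
Definition ecoef (m j : nat) : rat := j`!%:R * fps_pow one_minus_exp_neg m j.

Definition ecoef1 (i : nat) : rat := if i is i'.+1 then (-1) ^+ i' else 0.

Lemma ecoef0 j : ecoef 0 j = (j == 0%N)%:R.
Proof. by rewrite /ecoef /= /fps_one; case: j => [|j] /=; rewrite ?mul1r ?mulr0. Qed.

Lemma ecoefS m j :
  ecoef m.+1 j = \sum_(i < j.+1) 'C(j, i)%:R * ecoef1 i * ecoef m (j - i).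
Proof.
rewrite /ecoef /= /fps_mul mulr_sumr; apply: eq_bigr => -[i /= lt_ij] _.
have le_ij : (i <= j)%N by [].
have -> : j`!%:R = 'C(j, i)%:R * i`!%:R * (j - i)`!%:R :> rat.
  by rewrite -(bin_fact le_ij) !natrM mulrA.
rewrite /one_minus_exp_neg; case: i {lt_ij le_ij} => [|i] /=; first by rewrite !(mul0r, mulr0).
have fact_neq0 n : n`!%:R != 0 :> rat by rewrite pnatr_eq0 -lt0n fact_gt0.
by rewrite !exprS !mulN1r opprK; field; rewrite !fact_neq0.
Qed.

Lemma ecoef_small m j : (j < m)%N -> ecoef m j = 0.
Proof.
elim: m j => [//|m IHm] j lt_jm.
rewrite ecoefS big1 // => -[[|i] /= lt_ij] _; first by rewrite mulr0 mul0r.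
by rewrite IHm ?mulr0 //; lia.
Qed.

(* Multiplication by [e^{-t} = 1 - (1 - e^{-t})]. *)
Lemma ecoef_diff m j :
  ecoef m j - ecoef m.+1 j = \sum_(i < j.+1) 'C(j, i)%:R * (-1) ^+ i * ecoef m (j - i).
Proof.
rewrite ecoefS big_ord_recl [RHS]big_ord_recl /= !bin0 subn0 mulr0 mul0r add0r.
rewrite expr0 !mul1r -sumrN; congr (_ + _); apply: eq_bigr => i _.
rewrite /bump /= exprS; ring.
Qed.

(* The derivative of [u = 1 - e^{-t}] is [1 - u], so [(u^(m+1))' = (m+1) (u^m - u^(m+1))]. *)
Lemma ecoef_rec m j : ecoef m.+1 j.+1 = m.+1%:R * (ecoef m j - ecoef m.+1 j).
Proof.
elim: m j => [|m IHm] j; rewrite ecoefS;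
  under eq_bigr => i _ do rewrite -mulrA;
  rewrite (sum_binS (fun i => ecoef1 i * ecoef _ (j.+1 - i))).
- rewrite big1 ?add0r => [|[i /= lt_ij] _]; last by rewrite subSn // ecoef0 !mulr0.
  by rewrite mul1r ecoef_diff; apply: eq_bigr => i _; rewrite subSS mulrA.
- have -> : \sum_(i < j.+1) 'C(j, i)%:R * (ecoef1 i * ecoef m.+1 (j.+1 - i)) =
            m.+1%:R * (ecoef m.+1 j - ecoef m.+2 j).
    rewrite !ecoefS -sumrB mulr_sumr; apply: eq_bigr => -[i /= lt_ij] _.
    by rewrite subSn // IHm; ring.
  have -> : \sum_(i < j.+1) 'C(j, i)%:R * (ecoef1 i.+1 * ecoef m.+1 (j.+1 - i.+1)) =
            ecoef m.+1 j - ecoef m.+2 j.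
    by rewrite ecoef_diff; apply: eq_bigr => i _; rewrite subSS mulrA.
  ring.
Qed.

Definition pbpart (m j : nat) : rat := \sum_(k < j.+1) m.+1%:R ^+ k * ecoef m (j - k).

Lemma pbpart0 m : pbpart m 0 = ecoef m 0.
Proof. by rewrite /pbpart big_ord1 expr0 mul1r. Qed.

Lemma pbpartS m j : pbpart m j.+1 = m.+1%:R * pbpart m j + ecoef m j.+1.
Proof.
rewrite /pbpart big_ord_recl /= expr0 mul1r subn0 addrC mulr_sumr; congr (_ + _).
by apply: eq_bigr => i _; rewrite /bump /= subSS exprS mulrA.
Qed.

Lemma pbpart_small m j : (j < m)%N -> pbpart m j = 0.
Proof.
move=> lt_jm; rewrite /pbpart big1 // => i _.
by rewrite ecoef_small ?mulr0 //; apply: leq_ltn_trans (leq_subr _ _) lt_jm.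
Qed.

Lemma polyBernoulli_neg n k :
  polyBernoulli n (- k%:Z) = \sum_(m < n.+1) m.+1%:R ^+ k * ecoef m n.
Proof.
rewrite /polyBernoulli /polyLi_quot_coef big_add1 /= big_mkord mulr_sumr.
by apply: eq_bigr => m _; rewrite -exprnN invrK /ecoef; ring.
Qed.

Lemma pbsum_pbpart n M : (n < M)%N -> pbsum n = \sum_(m < M) pbpart m n.
Proof.
move=> lt_nM; rewrite /pbpart exchange_big /=; apply: eq_bigr => k _.
rewrite polyBernoulli_neg.
rewrite (big_ord_widen M (fun m => m.+1%:R ^+ k * ecoef m (n - k))); last lia.
rewrite big_mkcond /=; apply: eq_bigr => m _; case: ifP => // /negbT.
by rewrite -leqNgt => lt_nkm; rewrite ecoef_small ?mulr0.
Qed.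

Section TruncatedSeries.
Variables (R : comNzRingType) (N : nat).

Definition eqm (p q : {poly R}) := forall i, (i < N)%N -> p`_i = q`_i.
Local Notation "p =m q" := (eqm p q) (at level 70).

Lemma eqm_refl p : p =m p. Proof. by []. Qed.
Lemma eqm_eq p q : p = q -> p =m q. Proof. by move->. Qed.
Lemma eqm_sym p q : p =m q -> q =m p. Proof. by move=> Epq i lt_iN; rewrite Epq. Qed.
Lemma eqm_trans p q r : p =m q -> q =m r -> p =m r.
Proof. by move=> Epq Eqr i lt_iN; rewrite Epq ?Eqr. Qed.

Lemma eqmD p1 p2 q1 q2 : p1 =m q1 -> p2 =m q2 -> p1 + p2 =m q1 + q2.
Proof. by move=> E1 E2 i lt_iN; rewrite !coefD E1 ?E2. Qed.

Lemma eqmB p1 p2 q1 q2 : p1 =m q1 -> p2 =m q2 -> p1 - p2 =m q1 - q2.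
Proof. by move=> E1 E2 i lt_iN; rewrite !coefB E1 ?E2. Qed.

Lemma eqmM p1 p2 q1 q2 : p1 =m q1 -> p2 =m q2 -> p1 * p2 =m q1 * q2.
Proof.
move=> E1 E2 i lt_iN; rewrite !coefM; apply: eq_bigr => -[j /= lt_ji] _.
by rewrite E1 ?E2 //; lia.
Qed.

Lemma eqmMl r p q : p =m q -> r * p =m r * q.
Proof. by move/(eqmM (eqm_refl r)). Qed.

Lemma eqm_sum (I : finType) (F G : I -> {poly R}) :
  (forall i, F i =m G i) -> \sum_i F i =m \sum_i G i.
Proof. by move=> EFG i lt_iN; rewrite !coef_sum; apply: eq_bigr => j _; apply: EFG. Qed.

Lemma eqm_mul1Cl (K p q : {poly R}) : K`_0 = 1 -> K * p =m K * q -> p =m q.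
Proof.
move=> K0 EKpq; suff coef_eq0 n i : (i < n)%N -> (i < N)%N -> (p - q)`_i = 0.
  by move=> i lt_iN; apply/eqP; rewrite -subr_eq0 -coefB (coef_eq0 i.+1).
elim: n i => [//|n IHn] i lt_in lt_iN.
move: (EKpq i lt_iN) => /eqP; rewrite -subr_eq0 -coefB -mulrBr coefM big_ord_recl.
rewrite K0 mul1r subn0 big1 ?addr0 => [/eqP //|[j /= lt_ji] _].
by rewrite IHn ?mulr0 //= /bump /= add1n; lia.
Qed.

Definition lin (b a : R) : {poly R} := b%:P + a%:P * 'X.

Lemma coef_linM b a p i :
  (lin b a * p)`_i = b * p`_i + (if i is i'.+1 then a * p`_i' else 0).
Proof.
rewrite /lin mulrDl coefD coefCM -mulrA coefCM coefXM.
by case: i => [|i] //=; rewrite mulr0.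
Qed.

Lemma horner0_lin b a : (lin b a).[0] = b.
Proof. by rewrite /lin !hornerE. Qed.

Definition linprod (a m : nat) : {poly R} := \prod_(i < m) lin 1 (a + i)%:R.

Lemma linprodS a m : linprod a m.+1 = linprod a m * lin 1 (a + m)%:R.
Proof. by rewrite /linprod big_ord_recr. Qed.

Lemma linprod0S m : linprod 0 m.+1 = linprod 1 m.
Proof. by rewrite /linprod big_ord_recl /lin rmorph0 mul0r addr0 mul1r. Qed.

Lemma horner0_linprod a m : (linprod a m).[0] = 1.
Proof. by rewrite /linprod horner_prod big1 // => i _; apply: horner0_lin. Qed.

Definition geom : {poly R} := \poly_(j < N) 1.

Lemma geomK : lin 1 (-1) * geom =m 1.
Proof.
move=> [|i] lt_iN; rewrite coef_linM /geom coef1 coef_poly lt_iN /=.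
  by rewrite mulr1 addr0.
by rewrite coef_poly ltnW //; ring.
Qed.

(* The binomial transform, [g(x) |-> g(x/(1-x))/(1-x)] on ordinary generating series. *)
Definition bintr (g : {poly R}) : {poly R} :=
  \poly_(n < N) \sum_(k < n.+1) 'C(n, k)%:R * g`_k.

Lemma bintr_eqm g h : g =m h -> bintr g = bintr h.
Proof.
move=> Egh; apply/polyP => i; rewrite !coef_poly; case: ifP => // lt_iN.
by apply: eq_bigr => -[k /= lt_ki] _; rewrite Egh //; lia.
Qed.

Lemma bintrD g h : bintr (g + h) = bintr g + bintr h.
Proof.
apply/polyP => i; rewrite coefD !coef_poly; case: ifP => _; last by rewrite addr0.
by rewrite -big_split; apply: eq_bigr => k _; rewrite coefD mulrDr.
Qed.

Lemma bintrZ c g : bintr (c%:P * g) = c%:P * bintr g.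
Proof.
apply/polyP => i; rewrite coefCM !coef_poly; case: ifP => _; last by rewrite mulr0.
by rewrite mulr_sumr; apply: eq_bigr => k _; rewrite coefCM mulrCA.
Qed.

Lemma bintr1 : bintr 1 = geom.
Proof.
apply/polyP => i; rewrite /geom !coef_poly; case: ifP => // _.
rewrite big_ord_recl bin0 coef1 mulr1 big1 ?addr0 // => k _.
by rewrite coef1 mulr0.
Qed.

Lemma bintrX g : lin 1 (-1) * bintr ('X * g) =m 'X * bintr g.
Proof.
move=> [|i] lt_iN; rewrite coef_linM coefXM mul1r /bintr !coef_poly lt_iN /=.
  by rewrite big_ord1 coefXM mulr0 addr0.
rewrite ltnW // (sum_binS (fun k => ('X * g)`_k)).
have -> : \sum_(k < i.+1) 'C(i, k)%:R * ('X * g)`_k.+1 =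
          \sum_(k < i.+1) 'C(i, k)%:R * g`_k.
  by apply: eq_bigr => k _; rewrite coefXM.
ring.
Qed.

Lemma bintr_lin b a g : lin 1 (-1) * bintr (lin b a * g) =m lin b (a - b) * bintr g.
Proof.
have -> : lin b a * g = b%:P * g + a%:P * ('X * g) by rewrite /lin; ring.
rewrite bintrD !bintrZ.
have -> : lin 1 (-1) * (b%:P * bintr g + a%:P * bintr ('X * g)) =
   b%:P * (lin 1 (-1) * bintr g) + a%:P * (lin 1 (-1) * bintr ('X * g)) by ring.
apply: eqm_trans (eqmD (eqm_refl _) (eqmMl _ (bintrX g))) _.
have -> : lin b (a - b) * bintr g =
    b%:P * (lin 1 (-1) * bintr g) + a%:P * ('X * bintr g).
  by rewrite /lin rmorphB rmorphN rmorph1; ring.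
exact: eqm_refl.
Qed.

Lemma bintr_Xn m : lin 1 (-1) ^+ m.+1 * bintr 'X^m =m 'X^m.
Proof.
elim: m => [|m IHm]; first by rewrite expr1 expr0 bintr1; apply: geomK.
rewrite exprSr -mulrA [in bintr _]exprS.
apply: eqm_trans (eqmMl _ (bintrX _)) _.
by rewrite mulrCA (exprS 'X); apply: eqmMl.
Qed.

Lemma bintr_linprod m g :
  lin 1 (-1) ^+ m * bintr (linprod 1 m * g) =m linprod 0 m * bintr g.
Proof.
elim: m g => [|m IHm] g.
  by rewrite /linprod !big_ord0 expr0 !mul1r; apply: eqm_refl.
rewrite linprodS -mulrA exprS -mulrA.
apply: eqm_trans (eqmMl _ (IHm _)) _.
rewrite mulrCA.
apply: eqm_trans (eqmMl _ (bintr_lin _ _ _)) _.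
by rewrite add1n -natr1 addrK linprodS add0n mulrA; apply: eqm_refl.
Qed.

End TruncatedSeries.

Arguments linprod {R} a%_N m%_N.
Arguments geomK {R N}.

Section GeneratingSeries.
Variable N : nat.
Local Notation "p =m q" := (eqm N p q) (at level 70).
Local Notation geom := (geom _ N).
Local Notation bintr := (bintr N).

Definition egen m : {poly rat} := \poly_(j < N) ecoef m j.
Definition pbgen m : {poly rat} := \poly_(j < N) pbpart m j.

Lemma pbgen_egen m : lin 1 (- m.+1%:R) * pbgen m =m egen m.
Proof.
move=> [|i] lt_iN; rewrite coef_linM /pbgen /egen !coef_poly lt_iN mul1r /=.
  by rewrite addr0 pbpart0.
by rewrite ltnW // pbpartS; ring.
Qed.

Lemma egenS m : lin 1 m.+1%:R * egen m.+1 =m m.+1%:R%:P * ('X * egen m).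
Proof.
move=> [|i] lt_iN; rewrite coef_linM coefCM coefXM /egen !coef_poly lt_iN mul1r /=.
  by rewrite addr0 mulr0 ecoef_small.
by rewrite ltnW // ecoef_rec; ring.
Qed.

Lemma egen_linprod m : linprod 1 m * egen m =m m`!%:R%:P * 'X^m.
Proof.
elim: m => [|m IHm].
  move=> i lt_iN; rewrite /linprod big_ord0 mul1r /egen coef_poly lt_iN ecoef0.
  by rewrite expr0 mulr1 coefC; case: i {lt_iN}.
rewrite linprodS -mulrA; apply: eqm_trans (eqmMl _ (egenS m)) _.
rewrite mulrCA [linprod _ _ * _]mulrCA mulrA; apply: eqm_trans (eqmMl _ IHm) _.
by rewrite factS natrM rmorphM exprS; apply/eqm_eq; ring.
Qed.

Lemma pbgen_linprod m :
  linprod 1 m * (lin 1 (- m.+1%:R) * pbgen m) =m m`!%:R%:P * 'X^m.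
Proof. exact: eqm_trans (eqmMl _ (pbgen_egen m)) (egen_linprod m). Qed.

Lemma bintr_pbgen m :
  linprod 0 m * (lin 1 (- m.+2%:R) * bintr (pbgen m)) =m m`!%:R%:P * 'X^m.
Proof.
have Lpb : lin 1 (-1) ^+ m.+1 * bintr (linprod 1 m * (lin 1 (- m.+1%:R) * pbgen m)) =m
           linprod 0 m * (lin 1 (- m.+2%:R) * bintr (pbgen m)).
  rewrite exprS -mulrA; apply: eqm_trans (eqmMl _ (bintr_linprod _ _)) _.
  rewrite mulrCA; apply: eqm_trans (eqmMl _ (bintr_lin _ _ _)) _.
  have -> : - m.+1%:R - 1 = - m.+2%:R :> rat by rewrite -[m.+2]addn1 natrD opprD.
  exact: eqm_refl.
have LX : lin 1 (-1) ^+ m.+1 * bintr (m`!%:R%:P * 'X^m) =m (m`!%:R%:P * 'X^m : {poly rat}).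
  by rewrite bintrZ mulrCA; apply/eqmMl/bintr_Xn.
by rewrite (bintr_eqm (pbgen_linprod m)) in Lpb; apply: eqm_trans (eqm_sym Lpb) LX.
Qed.

Definition pbtele m : {poly rat} := lin 3 (- m.+3%:R) * geom * lin 1 m%:R * pbgen m.

Lemma pbgen_telescope m :
  lin 4 (-2) * pbgen m - bintr (pbgen m) =m pbtele m - pbtele m.+1.
Proof.
pose K : {poly rat} := lin 1 (-1) * linprod 1 m * lin 1 (- m.+1%:R) * lin 1 (- m.+2%:R).
apply: (@eqm_mul1Cl _ _ K).
  by rewrite -horner_coef0 !hornerM !horner0_lin horner0_linprod !mul1r.
have -> : K * (lin 4 (-2) * pbgen m - bintr (pbgen m)) =
   (lin 1 (-1) * lin 1 (- m.+2%:R) * lin 4 (-2)) * (linprod 1 m * (lin 1 (- m.+1%:R) * pbgen m))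
   - (lin 1 (-1) * lin 1 m%:R * lin 1 (- m.+1%:R)) *
     (linprod 0 m * (lin 1 (- m.+2%:R) * bintr (pbgen m))).
  by rewrite /K -linprod0S linprodS; ring.
have -> : K * (pbtele m - pbtele m.+1) =
   (lin 3 (- m.+3%:R) * lin 1 m%:R * lin 1 (- m.+2%:R)) * (lin 1 (-1) * geom) *
     (linprod 1 m * (lin 1 (- m.+1%:R) * pbgen m))
   - (lin 3 (- m.+4%:R) * lin 1 (- m.+1%:R)) * (lin 1 (-1) * geom) *
     (linprod 1 m.+1 * (lin 1 (- m.+2%:R) * pbgen m.+1)).
  by rewrite /K /pbtele linprodS; ring.
apply: eqm_trans (eqmB (eqmMl _ (pbgen_linprod m)) (eqmMl _ (bintr_pbgen m))) _.
apply: eqm_sym; apply: eqm_trans (eqmB (eqmM (eqmMl _ geomK) (pbgen_linprod m))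
                                      (eqmM (eqmMl _ geomK) (pbgen_linprod m.+1))) _.
apply/eqm_eq; rewrite /lin factS natrM !rmorphN !rmorphM !rmorph_nat !rmorph1 /= exprS.
ring.
Qed.

Lemma sum_pbgen : \sum_(m < N) (lin 4 (-2) * pbgen m - bintr (pbgen m)) =m 3%:P * geom.
Proof.
apply: eqm_trans (eqm_sum (fun m : 'I_N => pbgen_telescope m)) _.
rewrite -(big_mkord xpredT (fun m => pbtele m - pbtele m.+1)).
under eq_bigr do rewrite -opprB.
rewrite sumrN telescope_sumr // opprB.
have pbteleN : pbtele N =m 0.
  apply: eqm_trans (eqmMl _ (_ : pbgen N =m 0)) _; last by rewrite mulr0; apply: eqm_refl.
  by move=> i lt_iN; rewrite /pbgen coef_poly lt_iN coef0 pbpart_small.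
have pbtele0 : pbtele 0 =m 3%:P * geom.
  have -> : pbtele 0 = 3%:P * geom * (linprod 1 0 * (lin 1 (- 1%:R) * pbgen 0)).
    by rewrite /pbtele /linprod big_ord0 /lin !rmorphN !rmorph_nat /= rmorph0; ring.
  apply: eqm_trans (eqmMl _ (pbgen_linprod 0)) _.
  by rewrite expr0 !mulr1; apply: eqm_refl.
apply: eqm_trans (eqmB pbtele0 pbteleN) _.
by rewrite subr0; apply: eqm_refl.
Qed.

End GeneratingSeries.

Lemma pbpart_recurrence n :
  \sum_(m < n.+2) (4 * pbpart m n.+1 - 2 * pbpart m n
                   - \sum_(k < n.+2) 'C(n.+1, k)%:R * pbpart m k) = 3.
Proof.
move: (sum_pbgen (ltnSn n.+1)).
rewrite coef_sum coefCM /geom coef_poly ltnSn mulr1 => <-; apply: eq_bigr => m _.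
rewrite coefB coef_linM /pbgen /bintr !coef_poly ltnSn leqnSn mulNr; congr (_ - _).
by apply: eq_bigr => k _; rewrite coef_poly ltn_ord.
Qed.

Theorem proposition3p1 :
  pbsum 0 = 1 /\
  forall n : nat,
    3 * pbsum n.+1 = 2 * pbsum n + \sum_(k < n.+1) ('C(n.+1, k))%:R * pbsum k + 3.
Proof.
split; first by rewrite (pbsum_pbpart (M := 1)) // big_ord1 pbpart0 ecoef0.
move=> n; have := pbpart_recurrence n.
have swap : \sum_(m < n.+2) \sum_(k < n.+2) 'C(n.+1, k)%:R * pbpart m k =
    \sum_(k < n.+1) 'C(n.+1, k)%:R * \sum_(m < n.+2) pbpart m k
    + \sum_(m < n.+2) pbpart m n.+1.
  rewrite exchange_big big_ord_recr /= binn mulr1n.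
  congr (_ + _); first by apply: eq_bigr => k _; rewrite mulr_sumr.
  by apply: eq_bigr => m _; rewrite mul1r.
rewrite !sumrB -!mulr_sumr swap.
rewrite (pbsum_pbpart (ltnSn n.+1)) (pbsum_pbpart (leqnSn n.+1)).
under [X in _ = _ + X + _]eq_bigr => k _
  do rewrite (pbsum_pbpart (leq_trans (ltn_ord k) (leqnSn _))).
lra.
Qed.
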